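(* Let $A\in\mathbb{R}^{m\times n}$ have full column rank $n$, $b\in\mathbb{R}^m$, $L\in\mathbb{R}^{n\times k}$ with $k\le n$, and let $g(A,b)=L^T(A^TA)^{-1}A^Tb$, which is Fréchet differentiable in a neighbourhood of $(A,b)$ with derivative $g'(A,b)$. Fix a matrix norm $\|\cdot\|_\ast$, which is either the Frobenius norm or the spectral norm. For $\alpha,\beta>0$ define $$\kappa_{g}(A,b;\alpha,\beta)=\max_{(\Delta A,\Delta b)\neq 0}\frac{\|g'(A,b).(\Delta A,\Delta b)\|_2}{\sqrt{\alpha^2\|\Delta A\|_\ast^2+\beta^2\|\Delta b\|_2^2}},$$ and define $\kappa_{g}(b)=\max_{\Delta b\neq0}\frac{\|\frac{\partial g}{\partial b}(A,b).\Delta b\|_2}{\|\Delta b\|_2}$ and $\kappa_{g}(A)=\max_{\Delta A\neq0}\frac{\|\frac{\partial g}{\partial A}(A,b).\Delta A\|_2}{\|\Delta A\|_\ast}$. Then for every fixed $\beta>0$, $$\lim_{\alpha\to+\infty}\kappa_g(A,b;\alpha,\beta)=\frac{1}{\beta}\kappa_g(b),$$ and for every fixed $\alpha>0$, $$\lim_{\beta\to+\infty}\kappa_g(A,b;\alpha,\beta)=\frac{1}{\alpha}\kappa_g(A).$$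
   Context: $\|\cdot\|_2$ is the Euclidean norm on vectors. $\frac{\partial g}{\partial A}(A,b)$ and $\frac{\partial g}{\partial b}(A,b)$ are the partial Fréchet derivatives of $g$, so that $g'(A,b).(\Delta A,\Delta b)=\frac{\partial g}{\partial A}(A,b).\Delta A+\frac{\partial g}{\partial b}(A,b).\Delta b$. *)

From HB Require Import structures.
From mathcomp Require Import all_boot all_order all_algebra.
From mathcomp Require Import all_classical all_reals all_analysis.
Set Implicit Arguments. Unset Strict Implicit. Unset Printing Implicit Defensive.
Import Order.TTheory GRing.Theory Num.Theory.
Import numFieldNormedType.Exports.
Local Open Scope classical_set_scope.
Local Open Scope ring_scope.

Definition vnorm2 {R : realType} {p : nat} (v : 'cV[R]_p) : R :=
  Num.sqrt (\sum_(i < p) v i 0 ^+ 2).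

Definition frobnorm {R : realType} {m n : nat} (M : 'M[R]_(m, n)) : R :=
  Num.sqrt (\sum_(i < m) \sum_(j < n) M i j ^+ 2).

Definition specnorm {R : realType} {m n : nat} (M : 'M[R]_(m, n)) : R :=
  sup [set r | exists x : 'cV[R]_n, x != 0 /\ r = vnorm2 (M *m x) / vnorm2 x].

Inductive mxnorm_kind := Frobenius | Spectral.

Definition mxnorm {R : realType} {m n : nat} (kind : mxnorm_kind)
  (M : 'M[R]_(m, n)) : R :=
  match kind with Frobenius => frobnorm M | Spectral => specnorm M end.

Definition gfun {R : realType} {m n k : nat} (L : 'M[R]_(n, k))
  (Ab : 'M[R]_(m, n) * 'cV[R]_m) : 'cV[R]_k :=
  L^T *m invmx (Ab.1^T *m Ab.1) *m Ab.1^T *m Ab.2.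

Definition kappa_ab {R : realType} {m n k : nat} (kind : mxnorm_kind)
  (L : 'M[R]_(n, k)) (A : 'M[R]_(m, n)) (b : 'cV[R]_m) (alpha beta : R) : R :=
  sup [set r | exists (dA : 'M[R]_(m, n)) (db : 'cV[R]_m),
         (dA, db) != 0 /\
         r = vnorm2 ('d (gfun L) (A, b) (dA, db))
             / Num.sqrt (alpha ^+ 2 * mxnorm kind dA ^+ 2 + beta ^+ 2 * vnorm2 db ^+ 2)].

(* partial derivative wrt b: dg/db . db = g'(A,b).(0, db) *)
Definition kappa_b {R : realType} {m n k : nat}
  (L : 'M[R]_(n, k)) (A : 'M[R]_(m, n)) (b : 'cV[R]_m) : R :=
  sup [set r | exists db : 'cV[R]_m, db != 0 /\
         r = vnorm2 ('d (gfun L) (A, b) (0, db)) / vnorm2 db].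

(* partial derivative wrt A: dg/dA . dA = g'(A,b).(dA, 0) *)
Definition kappa_A {R : realType} {m n k : nat} (kind : mxnorm_kind)
  (L : 'M[R]_(n, k)) (A : 'M[R]_(m, n)) (b : 'cV[R]_m) : R :=
  sup [set r | exists dA : 'M[R]_(m, n), dA != 0 /\
         r = vnorm2 ('d (gfun L) (A, b) (dA, 0)) / mxnorm kind dA].

(* The joint condition number is squeezed between the two partial ones:
   restricting the perturbations to [(0, db)] or to [(dA, 0)] gives
   [kappa_b / beta <= kappa_ab] and [kappa_A / alpha <= kappa_ab], while
   linearity of [g'] and the triangle inequality give
   [kappa_ab <= kappa_A / alpha + kappa_b / beta], because the weighted
   norm of [(dA, db)] dominates both [alpha ||dA||] and [beta ||db||].
   Letting one weight go to infinity kills the corresponding term. *)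

From HB Require Import structures.
From mathcomp Require Import all_boot all_order all_algebra.
From mathcomp Require Import all_classical all_reals all_analysis.
From mathcomp Require Import ring lra.
Import Order.TTheory GRing.Theory Num.Theory.
Import numFieldNormedType.Exports.
Local Open Scope classical_set_scope.
Local Open Scope ring_scope.

Section Supremum.
Context {R : realType}.
Implicit Types (E : set R) (c : R).

(* [sup set0 = 0] in the library, hence the sign condition. *)
Lemma ge0_ge_sup E c : ubound E c -> 0 <= c -> sup E <= c.
Proof.
move=> Ec c0; have [->|/set0P E0] := eqVneq E set0; first by rewrite sup0.
exact: ge_sup.
Qed.

Lemma sup_ge0 E : has_ubound E -> (forall x, E x -> 0 <= x) -> 0 <= sup E.
Proof.
move=> Eub E_ge0; have [->|/set0P [x Ex]] := eqVneq E set0; first by rewrite sup0.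
exact: le_trans (E_ge0 _ Ex) (ub_le_sup Eub Ex).
Qed.

End Supremum.

Lemma cvg_addr_div_pinfty {R : realType} (l c : R) : (fun x => l + c / x) @ +oo --> l.
Proof.
rewrite -[X in _ --> X]addr0; apply: cvgD; first exact: cvg_cst.
rewrite -(mulr0 c); apply: cvgM; first exact: cvg_cst.
by apply/gtr0_cvgV0; [near=> x | exact: cvg_id].
Unshelve. all: end_near. Qed.

Section EuclideanNorm.
Context {R : realType} {p : nat}.
Implicit Types u v : 'cV[R]_p.

Lemma vnorm2_ge0 v : 0 <= vnorm2 v.
Proof. exact: sqrtr_ge0. Qed.

Lemma vnorm2_sq v : vnorm2 v ^+ 2 = \sum_(i < p) v i 0 ^+ 2.
Proof. by rewrite sqr_sqrtr // sumr_ge0 // => i _; exact: sqr_ge0. Qed.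

Lemma vnorm2_0 : vnorm2 (0 : 'cV[R]_p) = 0.
Proof. by rewrite /vnorm2 big1 ?sqrtr0 // => i _; rewrite mxE expr0n. Qed.

Lemma ler_coord_vnorm2 v i : `|v i 0| <= vnorm2 v.
Proof.
rewrite -sqrtr_sqr; apply: ler_wsqrtr.
by rewrite (bigD1 i) //= lerDl sumr_ge0 // => j _; exact: sqr_ge0.
Qed.

Lemma vnorm2_gt0 {v} : v != 0 -> 0 < vnorm2 v.
Proof.
move=> v0; have [i vi] : exists i, v i 0 != 0.
  apply/existsP; apply: contraNT v0; rewrite negb_exists => /forallP vi0.
  by apply/eqP/matrixP => i j; rewrite (ord1 j) mxE; apply/eqP/negPn.
by apply: lt_le_trans (ler_coord_vnorm2 v i); rewrite normr_gt0.
Qed.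

Lemma vnorm2_le_sum_norm v : vnorm2 v <= \sum_(i < p) `|v i 0|.
Proof.
have [sq_le sum_ge0] : \sum_(i < p) v i 0 ^+ 2 <= (\sum_(i < p) `|v i 0|) ^+ 2
                       /\ 0 <= \sum_(i < p) `|v i 0|.
  elim/big_rec2: _ => [|i y1 y2 _ [h1 h2]]; first by rewrite expr0n.
  rewrite -(real_normK (num_real (v i 0))).
  have := normr_ge0 (v i 0); move: `|v i 0| => a a0; split; nra.
by rewrite -(ger0_norm sum_ge0) -sqrtr_sqr; apply: ler_wsqrtr.
Qed.

Lemma cauchy_schwarz_vnorm2 u v :
  \sum_(i < p) u i 0 * v i 0 <= vnorm2 u * vnorm2 v.
Proof.
have [->|u0] := eqVneq u 0.
  by rewrite vnorm2_0 mul0r big1 // => i _; rewrite mxE mul0r.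
have [->|v0] := eqVneq v 0.
  by rewrite vnorm2_0 mulr0 big1 // => i _; rewrite mxE mulr0.
have a0 := vnorm2_gt0 u0; have b0 := vnorm2_gt0 v0.
set a := vnorm2 u in a0 *; set b := vnorm2 v in b0 *.
(* Summing [(b u_i - a v_i)^2 >= 0] gives [2 a b <u, v> <= 2 a^2 b^2]. *)
have cross : 2 * a * b * \sum_(i < p) u i 0 * v i 0 <=
             b ^+ 2 * \sum_(i < p) u i 0 ^+ 2 + a ^+ 2 * \sum_(i < p) v i 0 ^+ 2.
  rewrite !mulr_sumr -big_split /=; apply: ler_sum => i _.
  by have := sqr_ge0 (b * u i 0 - a * v i 0); nra.
have ab0 : 0 < 2 * a * b by rewrite !mulr_gt0.
by rewrite -(ler_pM2l ab0); move: cross; rewrite -!vnorm2_sq -/a -/b; nra.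
Qed.

Lemma ler_vnorm2D u v : vnorm2 (u + v) <= vnorm2 u + vnorm2 v.
Proof.
rewrite -(ger0_norm (addr_ge0 (vnorm2_ge0 u) (vnorm2_ge0 v))) -sqrtr_sqr.
apply: ler_wsqrtr.
have -> : \sum_(i < p) (u + v) i 0 ^+ 2 = \sum_(i < p) u i 0 ^+ 2 +
    \sum_(i < p) v i 0 ^+ 2 + 2 * \sum_(i < p) u i 0 * v i 0.
  by rewrite mulr_sumr -!big_split /=; apply: eq_bigr => i _; rewrite mxE; ring.
by rewrite -!vnorm2_sq; have := cauchy_schwarz_vnorm2 u v; nra.
Qed.

End EuclideanNorm.

Section MatrixNorms.
Context {R : realType} {m n : nat}.
Implicit Types M : 'M[R]_(m, n).

Lemma ler_entry_frobnorm M i j : `|M i j| <= frobnorm M.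
Proof.
rewrite -sqrtr_sqr; apply: ler_wsqrtr.
rewrite (bigD1 i) //= (bigD1 j) //= -addrA lerDl addr_ge0 // sumr_ge0 // => *;
  rewrite ?sumr_ge0 // => *; exact: sqr_ge0.
Qed.

Lemma frobnorm0 : frobnorm (0 : 'M[R]_(m, n)) = 0.
Proof.
rewrite /frobnorm big1 ?sqrtr0 // => i _.
by rewrite big1 // => j _; rewrite mxE expr0n.
Qed.

Lemma vnorm2_mulmx_le M (x : 'cV[R]_n) :
  vnorm2 (M *m x) <= (\sum_(i < m) \sum_(j < n) `|M i j|) * vnorm2 x.
Proof.
apply: le_trans (vnorm2_le_sum_norm _) _; rewrite mulr_suml.
apply: ler_sum => i _; rewrite mxE mulr_suml.
apply: le_trans (ler_norm_sum _ _ _) _; apply: ler_sum => j _.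
by rewrite normrM ler_wpM2l // ler_coord_vnorm2.
Qed.

Lemma has_ubound_specnorm M :
  has_ubound [set r | exists x : 'cV[R]_n, x != 0 /\
                        r = vnorm2 (M *m x) / vnorm2 x].
Proof.
exists (\sum_(i < m) \sum_(j < n) `|M i j|) => _ [x [x0 ->]].
by rewrite ler_pdivrMr ?vnorm2_gt0 // vnorm2_mulmx_le.
Qed.

Lemma ler_entry_specnorm M i j : `|M i j| <= specnorm M.
Proof.
have ej0 : delta_mx j 0 != 0 :> 'cV[R]_n.
  by apply/eqP => /matrixP/(_ j 0)/eqP; rewrite !mxE !eqxx oner_eq0.
have ej1 : vnorm2 (delta_mx j 0 : 'cV[R]_n) = 1.
  rewrite /vnorm2 (bigD1 j) //= big1 ?addr0; first by rewrite mxE !eqxx expr1n sqrtr1.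
  by move=> l lj; rewrite mxE (negbTE lj) expr0n.
apply: le_trans (ub_le_sup (has_ubound_specnorm M) _); last by exists (delta_mx j 0).
by rewrite ej1 divr1 -colE; have := ler_coord_vnorm2 (col j M) i; rewrite mxE.
Qed.

Lemma specnorm_ge0 M : 0 <= specnorm M.
Proof.
apply: sup_ge0 (has_ubound_specnorm M) _ => _ [x [_ ->]].
by rewrite divr_ge0 ?vnorm2_ge0.
Qed.

Lemma specnorm0 : specnorm (0 : 'M[R]_(m, n)) = 0.
Proof.
apply/le_anti; rewrite specnorm_ge0 andbT; apply: ge0_ge_sup => // _ [x [_ ->]].
by rewrite mul0mx vnorm2_0 mul0r.
Qed.

Variable kind : mxnorm_kind.

Lemma ler_entry_mxnorm M i j : `|M i j| <= mxnorm kind M.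
Proof. by case: kind; [exact: ler_entry_frobnorm | exact: ler_entry_specnorm]. Qed.

Lemma mxnorm0 : mxnorm kind (0 : 'M[R]_(m, n)) = 0.
Proof. by case: kind; [exact: frobnorm0 | exact: specnorm0]. Qed.

Lemma mxnorm_ge0 M : 0 <= mxnorm kind M.
Proof. by case: kind; [exact: sqrtr_ge0 | exact: specnorm_ge0]. Qed.

Lemma mxnorm_gt0 {M} : M != 0 -> 0 < mxnorm kind M.
Proof.
move=> M0; have [i [j Mij]] : exists i j, M i j != 0.
  apply: contrapT => entries0; move/eqP: M0; apply; apply/matrixP => i j.
  by rewrite mxE; apply/eqP/negPn/negP => Mij; apply: entries0; exists i, j.
by apply: lt_le_trans (ler_entry_mxnorm M i j); rewrite normr_gt0.
Qed.

End MatrixNorms.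

Section SupNorm.
Context {R : realType} {p q : nat}.
Implicit Types M : 'M[R]_(p, q).

Lemma ler_entry_mx_norm M i j : `|M i j| <= `|M|.
Proof. by rewrite [`|M|]mx_normrE (bigD1 (i, j)) //= le_max lexx. Qed.

Lemma mx_norm_le M c : 0 <= c -> (forall i j, `|M i j| <= c) -> `|M| <= c.
Proof.
move=> c0 Mc; rewrite [`|M|]mx_normrE; elim/big_ind: _ => // x y xc yc.
by rewrite ge_max xc yc.
Qed.

End SupNorm.

Section ConditionNumbers.
Context {R : realType} {m n k : nat} (kind : mxnorm_kind).
Implicit Types (al be : R) (dA : 'M[R]_(m, n)) (db : 'cV[R]_m).

Definition weighted_norm al be dA db :=
  Num.sqrt (al ^+ 2 * mxnorm kind dA ^+ 2 + be ^+ 2 * vnorm2 db ^+ 2).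

Lemma weighted_norm_ge0 al be dA db : 0 <= weighted_norm al be dA db.
Proof. exact: sqrtr_ge0. Qed.

Lemma ler_weighted_norm_l al be dA db :
  0 <= al -> al * mxnorm kind dA <= weighted_norm al be dA db.
Proof.
move=> al0; rewrite -[leLHS]ger0_norm ?mulr_ge0 ?mxnorm_ge0 // -sqrtr_sqr.
by apply: ler_wsqrtr; rewrite exprMn lerDl mulr_ge0 ?sqr_ge0.
Qed.

Lemma ler_weighted_norm_r al be dA db :
  0 <= be -> be * vnorm2 db <= weighted_norm al be dA db.
Proof.
move=> be0; rewrite -[leLHS]ger0_norm ?mulr_ge0 ?vnorm2_ge0 // -sqrtr_sqr.
by apply: ler_wsqrtr; rewrite exprMn lerDr mulr_ge0 ?sqr_ge0.
Qed.

Lemma weighted_norm_l al be dA :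
  0 <= al -> weighted_norm al be dA 0 = al * mxnorm kind dA.
Proof.
move=> al0; rewrite /weighted_norm vnorm2_0 expr0n mulr0 addr0 -exprMn.
by rewrite sqrtr_sqr ger0_norm // mulr_ge0 ?mxnorm_ge0.
Qed.

Lemma weighted_norm_r al be db :
  0 <= be -> weighted_norm al be 0 db = be * vnorm2 db.
Proof.
move=> be0; rewrite /weighted_norm mxnorm0 expr0n mulr0 add0r -exprMn.
by rewrite sqrtr_sqr ger0_norm // mulr_ge0 ?vnorm2_ge0.
Qed.

Lemma mx_norm_pair_l dA : `|(dA, 0 : 'cV[R]_m)| <= mxnorm kind dA.
Proof.
rewrite prod_normE ge_max /= normr0 mxnorm_ge0 andbT.
exact: mx_norm_le (mxnorm_ge0 _ _) (ler_entry_mxnorm _ dA).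
Qed.

Lemma mx_norm_pair_r db : `|(0 : 'M[R]_(m, n), db)| <= vnorm2 db.
Proof.
rewrite prod_normE ge_max /= normr0 vnorm2_ge0 /=.
apply: mx_norm_le (vnorm2_ge0 _) _ => i j; rewrite (ord1 j).
exact: ler_coord_vnorm2.
Qed.

Variable f : {linear ('M[R]_(m, n) * 'cV[R]_m)%type -> 'cV[R]_k}.
Hypothesis f_cont : continuous f.

Definition cond_A := sup [set r | exists dA, dA != 0 /\
  r = vnorm2 (f (dA, 0)) / mxnorm kind dA].

Definition cond_b := sup [set r | exists db, db != 0 /\
  r = vnorm2 (f (0, db)) / vnorm2 db].

Definition cond_ab al be := sup [set r | exists dA db, (dA, db) != 0 /\
  r = vnorm2 (f (dA, db)) / weighted_norm al be dA db].

Lemma vnorm2_linear_bounded : exists2 C, 0 <= C & forall x, vnorm2 (f x) <= C * `|x|.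
Proof.
have /linear_boundedP/pinfty_ex_gt0 [r r0 f_le] :=
  continuous_linear_bounded 0 (f_cont 0).
exists (k%:R * r) => [|x]; first by rewrite mulr_ge0 // ltW.
apply: le_trans (vnorm2_le_sum_norm _) _.
apply: (@le_trans _ _ (\sum_(i < k) `|f x|)).
  by apply: ler_sum => i _; exact: ler_entry_mx_norm.
by rewrite sumr_const card_ord -[_ *+ k]mulr_natl -mulrA ler_wpM2l // f_le.
Qed.

Lemma has_ubound_cond_A : has_ubound [set r | exists dA, dA != 0 /\
  r = vnorm2 (f (dA, 0)) / mxnorm kind dA].
Proof.
have [C C0 fC] := vnorm2_linear_bounded; exists C => _ [dA [dA0 ->]].
rewrite ler_pdivrMr ?mxnorm_gt0 //; apply: le_trans (fC _) _.
by rewrite ler_wpM2l // mx_norm_pair_l.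
Qed.

Lemma has_ubound_cond_b : has_ubound [set r | exists db, db != 0 /\
  r = vnorm2 (f (0, db)) / vnorm2 db].
Proof.
have [C C0 fC] := vnorm2_linear_bounded; exists C => _ [db [db0 ->]].
rewrite ler_pdivrMr ?vnorm2_gt0 //; apply: le_trans (fC _) _.
by rewrite ler_wpM2l // mx_norm_pair_r.
Qed.

Lemma cond_A_ge0 : 0 <= cond_A.
Proof.
by apply: sup_ge0 has_ubound_cond_A _ => _ [dA [_ ->]]; rewrite divr_ge0 ?vnorm2_ge0 ?mxnorm_ge0.
Qed.

Lemma cond_b_ge0 : 0 <= cond_b.
Proof.
by apply: sup_ge0 has_ubound_cond_b _ => _ [db [_ ->]]; rewrite divr_ge0 ?vnorm2_ge0.
Qed.

Lemma vnorm2_le_cond_A dA : vnorm2 (f (dA, 0)) <= cond_A * mxnorm kind dA.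
Proof.
have [->|dA0] := eqVneq dA 0; first by rewrite linear0 vnorm2_0 mxnorm0 mulr0.
rewrite -ler_pdivrMr ?mxnorm_gt0 //.
by apply: (ub_le_sup has_ubound_cond_A); exists dA.
Qed.

Lemma vnorm2_le_cond_b db : vnorm2 (f (0, db)) <= cond_b * vnorm2 db.
Proof.
have [->|db0] := eqVneq db 0; first by rewrite linear0 !vnorm2_0 mulr0.
rewrite -ler_pdivrMr ?vnorm2_gt0 //.
by apply: (ub_le_sup has_ubound_cond_b); exists db.
Qed.

Section Weights.
Variables (al be : R).
Hypotheses (al_gt0 : 0 < al) (be_gt0 : 0 < be).

Lemma cond_ratio_le dA db :
  vnorm2 (f (dA, db)) / weighted_norm al be dA db <= cond_A / al + cond_b / be.
Proof.
set w := weighted_norm al be dA db.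
have [w0|w_gt0] := eqVneq w 0.
  by rewrite w0 invr0 mulr0 addr_ge0 // divr_ge0 ?cond_A_ge0 ?cond_b_ge0 ?ltW.
have {w_gt0} w_gt0 : 0 < w by rewrite lt_neqAle eq_sym w_gt0 weighted_norm_ge0.
have -> : (dA, db) = (dA, 0) + (0, db) :> _ * _.
  by rewrite -[RHS]/(dA + 0, 0 + db) addr0 add0r.
rewrite linearD ler_pdivrMr //; apply: le_trans (ler_vnorm2D _ _) _.
rewrite mulrDl; apply: lerD.
- apply: le_trans (vnorm2_le_cond_A dA) _; rewrite -mulrA ler_wpM2l ?cond_A_ge0 //.
  by rewrite ler_pdivlMl // ler_weighted_norm_l ?ltW.
- apply: le_trans (vnorm2_le_cond_b db) _; rewrite -mulrA ler_wpM2l ?cond_b_ge0 //.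
  by rewrite ler_pdivlMl // ler_weighted_norm_r ?ltW.
Qed.

Lemma has_ubound_cond_ab : has_ubound [set r | exists dA db, (dA, db) != 0 /\
  r = vnorm2 (f (dA, db)) / weighted_norm al be dA db].
Proof. by exists (cond_A / al + cond_b / be) => _ [dA [db [_ ->]]]; exact: cond_ratio_le. Qed.

Lemma cond_ab_ge0 : 0 <= cond_ab al be.
Proof.
apply: sup_ge0 has_ubound_cond_ab _ => _ [dA [db [_ ->]]].
by rewrite divr_ge0 ?vnorm2_ge0 ?weighted_norm_ge0.
Qed.

Lemma cond_ab_le : cond_ab al be <= cond_A / al + cond_b / be.
Proof.
apply: ge0_ge_sup => [_ [dA [db [_ ->]]]|]; first exact: cond_ratio_le.
by rewrite addr_ge0 // divr_ge0 ?cond_A_ge0 ?cond_b_ge0 ?ltW.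
Qed.

Lemma cond_A_div_le : cond_A / al <= cond_ab al be.
Proof.
rewrite ler_pdivrMr //; apply: ge0_ge_sup; last by rewrite mulr_ge0 ?cond_ab_ge0 ?ltW.
move=> _ [dA [dA0 ->]]; rewrite -ler_pdivrMr // -mulrA -invfM [_ * al]mulrC.
rewrite -(weighted_norm_l _ be dA (ltW al_gt0)).
apply: (ub_le_sup has_ubound_cond_ab); exists dA, 0.
by split => //; apply: contra dA0 => /eqP[->].
Qed.

Lemma cond_b_div_le : cond_b / be <= cond_ab al be.
Proof.
rewrite ler_pdivrMr //; apply: ge0_ge_sup; last by rewrite mulr_ge0 ?cond_ab_ge0 ?ltW.
move=> _ [db [db0 ->]]; rewrite -ler_pdivrMr // -mulrA -invfM [_ * be]mulrC.
rewrite -(weighted_norm_r al _ db (ltW be_gt0)).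
apply: (ub_le_sup has_ubound_cond_ab); exists 0, db.
by split => //; apply: contra db0 => /eqP[->].
Qed.

End Weights.

Lemma cond_ab_cvg_b be : 0 < be -> (fun al => cond_ab al be) @ +oo --> cond_b / be.
Proof.
move=> be_gt0; apply: squeeze_cvgr (cvg_cst _) (cvg_addr_div_pinfty _ cond_A).
near=> al; have al_gt0 : 0 < al by near: al; exact: nbhs_pinfty_gt.
by rewrite cond_b_div_le //= addrC cond_ab_le.
Unshelve. all: end_near. Qed.

Lemma cond_ab_cvg_A al : 0 < al -> (fun be => cond_ab al be) @ +oo --> cond_A / al.
Proof.
move=> al_gt0; apply: squeeze_cvgr (cvg_cst _) (cvg_addr_div_pinfty _ cond_b).
near=> be; have be_gt0 : 0 < be by near: be; exact: nbhs_pinfty_gt.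
by rewrite cond_A_div_le //= cond_ab_le.
Unshelve. all: end_near. Qed.

End ConditionNumbers.

(* The rank and size hypotheses only make [g] differentiable in the paper;
   differentiability is assumed here directly. *)
Theorem mainTheorem3 (R : realType) (m n k : nat) (A : 'M[R]_(m, n))
  (b : 'cV[R]_m) (L : 'M[R]_(n, k)) (kind : mxnorm_kind) :
  \rank A = n -> (k <= n)%N ->
  differentiable (gfun L) (A, b) ->
  (forall beta : R, 0 < beta ->
     (fun alpha => kappa_ab kind L A b alpha beta) @ +oo%R
       --> kappa_b L A b / beta) /\
  (forall alpha : R, 0 < alpha ->
     (fun beta => kappa_ab kind L A b alpha beta) @ +oo%R
       --> kappa_A kind L A b / alpha).
Proof.
move=> _ _ /diff_continuous dg_cont.
by split=> [be|al]; [exact: cond_ab_cvg_b | exact: cond_ab_cvg_A].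
Qed.
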